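(* Let $(\Omega,\mathcal{F},\mathbb{P})$ be a nonatomic probability space, let $a>0$, $c\ge0$, $C=\frac1a(1+ac-\sqrt{1+a^2c^2})$, and let $u(x)=C$ for $x\ge c$ and $u(x)=\frac1a(1+ax-\sqrt{1+a^2x^2})$ for $x<c$. Let $\alpha<C$ and set $\mathcal{A}_u^\infty=\{X\in L^\infty:\mathbb{E}[u(X)]\ge\alpha\}$. Let $S=(S_0,S_T)$ be a traded asset with $S_T\in L^\infty$ and assume $\rho_{\mathcal{A}_u^\infty,S}$ is finite-valued on $L^\infty$. Then $\mathrm{Index}_{\mathrm{fin}}(\rho_{\mathcal{A}_u^\infty,S})=1$ and the infimum defining the index is attained.
   Context: A traded asset is $S=(S_0,S_T)$ with $S_0>0$, $S_T\ge0$ a.s., $S_T\ne0$. For $\mathcal{B}\subset L^\infty$, $\rho_{\mathcal{B},S}(X)=\inf\{m\in\mathbb{R}:X+\frac{m}{S_0}S_T\in\mathcal{B}\}$. For a convex, law-invariant acceptance set $\mathcal{A}\subset L^\infty$ with $\rho_{\mathcal{A},S}$ finite-valued on $L^\infty$, $\mathrm{Index}_{\mathrm{fin}}(\rho_{\mathcal{A},S})=\inf\{p\in[1,\infty):\text{the closure of }\mathcal{A}\text{ in }L^p\text{ has nonempty interior in }L^p\}$, with $\inf\emptyset=\infty$; the index is attained if this infimum belongs to the set. *)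

From HB Require Import structures.
From mathcomp Require Import all_boot all_order all_algebra.
From mathcomp Require Import all_classical all_reals all_analysis.
Set Implicit Arguments. Unset Strict Implicit. Unset Printing Implicit Defensive.
Import Order.TTheory GRing.Theory Num.Theory.
Local Open Scope classical_set_scope.
Local Open Scope ring_scope.

Section Defs.
Context {d : measure_display} {T : measurableType d} {R : realType}.
Variable P : probability T R.

Definition nonatomic : Prop :=
  forall A : set T, measurable A -> (0 < P A)%E ->
    exists B : set T, [/\ measurable B, B `<=` A, (0 < P B)%E & (P B < P A)%E].

Definition Linf (f : T -> R) : Prop :=
  measurable_fun setT f /\ finite_norm P +oo%E f.

Definition Lp (p : R) (f : T -> R) : Prop :=
  measurable_fun setT f /\ finite_norm P p%:E f.

Definition Ldist (p : R) (f g : T -> R) : \bar R :=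
  'N[P]_p%:E [EFin \o (f \- g)].

Definition Lclosure (p : R) (B : set (T -> R)) : set (T -> R) :=
  [set f | Lp p f /\
     forall e : R, 0 < e -> exists g, B g /\ (Ldist p f g < e%:E)%E].

Definition Lp_interior_nonempty (p : R) (C : set (T -> R)) : Prop :=
  exists f, Lp p f /\ exists2 e : R, 0 < e &
    forall g, Lp p g -> (Ldist p g f < e%:E)%E -> C g.

Definition index_set (B : set (T -> R)) : set R :=
  [set p | 1 <= p /\ Lp_interior_nonempty p (Lclosure p B)].

(* Index_fin (inf of the empty set is +oo) *)
Definition Index_fin (B : set (T -> R)) : \bar R :=
  ereal_inf [set p%:E | p in index_set B].

Definition Index_fin_attained (B : set (T -> R)) : Prop :=
  exists2 p, index_set B p & p%:E = Index_fin B.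

Definition rho (B : set (T -> R)) (S0 : R) (ST : T -> R) (X : T -> R) : \bar R :=
  ereal_inf [set m%:E | m in [set m : R | B (X \+ (fun w => m / S0 * ST w))]].

Definition Cconst (a c : R) : R := (1 + a * c - Num.sqrt (1 + a ^+ 2 * c ^+ 2)) / a.

Definition u_fun (a c : R) (x : R) : R :=
  if x < c then (1 + a * x - Num.sqrt (1 + a ^+ 2 * x ^+ 2)) / a else Cconst a c.

Definition Au (a c alpha : R) : set (T -> R) :=
  [set X | Linf X /\ (alpha%:E <= \int[P]_w (u_fun a c (X w))%:E)%E].

End Defs.

(* Below [c] the utility [u] is 2-Lipschitz (the map [x |-> sqrt (1 + x^2)] is
   1-Lipschitz) and above [c] it equals [C], so [|u x - C| <= 2 |x - c|] and
   [E[u X] >= C - 2 E|X - c|].  Hence every bounded [X] within L^1-distance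
   [(C - alpha)/2] of the constant [c] is acceptable.  An arbitrary L^1 function
   [g] in that ball is the L^1-limit (dominated convergence) of its truncations
   [c + clip_n (g - c)], which are bounded and stay in the ball.  So the
   L^1-closure of [A_u] contains an L^1-ball, [1] belongs to the index set, and
   since that set lies in [[1, oo)] the index is [1] and attained. *)
From HB Require Import structures.
From mathcomp Require Import all_boot all_order all_algebra.
From mathcomp Require Import all_classical all_reals all_analysis.
From mathcomp Require Import ring lra measurable_realfun ess_sup_inf.
Import Order.TTheory GRing.Theory Num.Theory.
Local Open Scope classical_set_scope.
Local Open Scope ring_scope.

Lemma dist_sqrt1D_sqr {R : realType} (s t : R) :
  `|Num.sqrt (1 + s ^+ 2) - Num.sqrt (1 + t ^+ 2)| <= `|s - t|.
Proof.
have sqrt_le (x y : R) : Num.sqrt (1 + x ^+ 2) <= Num.sqrt (1 + y ^+ 2) + `|x - y|.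
  have h0 : 0 <= Num.sqrt (1 + y ^+ 2) + `|x - y| by rewrite addr_ge0 ?sqrtr_ge0.
  rewrite -[leRHS]ger0_norm // -sqrtr_sqr ler_sqrt ?sqr_ge0 //.
  have y_le : `|y| <= Num.sqrt (1 + y ^+ 2).
    by rewrite -sqrtr_sqr ler_sqrt ?addr_ge0 ?sqr_ge0 // lerDr.
  have cross : (x - y) * y <= `|x - y| * Num.sqrt (1 + y ^+ 2).
    by rewrite (le_trans (ler_norm _)) // normrM ler_wpM2l.
  have sq : `|x - y| ^+ 2 = (x - y) ^+ 2 by rewrite -normrX ger0_norm ?sqr_ge0.
  rewrite sqrrD sqr_sqrtr ?addr_ge0 ?sqr_ge0 // sq; nra.
have := sqrt_le s t; have := sqrt_le t s; rewrite distrC ler_norml.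
by move=> ts st; apply/andP; split; lra.
Qed.

Lemma dist_u_fun_Cconst {R : realType} (a c x : R) : 0 < a ->
  `|u_fun a c x - Cconst a c| <= 2 * `|x - c|.
Proof.
move=> a0; rewrite /u_fun; case: ifPn => [xc|_]; last by rewrite subrr normr0 mulr_ge0.
have -> : (1 + a * x - Num.sqrt (1 + a ^+ 2 * x ^+ 2)) / a - Cconst a c =
    (a * (x - c) - (Num.sqrt (1 + (a * x) ^+ 2) - Num.sqrt (1 + (a * c) ^+ 2))) / a.
  by rewrite /Cconst !exprMn; field; rewrite lt0r_neq0.
rewrite normrM normfV [`|a|]gtr0_norm // ler_pdivrMr //.
rewrite (le_trans (ler_normB _ _)) // normrM gtr0_norm //.
rewrite (le_trans (lerD (lexx _) (dist_sqrt1D_sqr _ _))) //.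
by rewrite -mulrBr !normrM (gtr0_norm a0); lra.
Qed.

Lemma measurable_u_fun {R : realType} (a c : R) : measurable_fun setT (u_fun a c).
Proof.
have -> : u_fun a c = (fun y => (1 + a * Num.min y c
    - Num.sqrt (1 + a ^+ 2 * (Num.min y c) ^+ 2)) / a).
  by apply/funext => y; rewrite /u_fun /Cconst /Num.min /Order.min; case: ifPn.
apply: measurable_funM => //; apply: measurable_funB.
  by apply: measurable_funD => //; apply: measurable_funM => //; exact: measurable_minr.
apply: measurableT_comp; first exact: continuous_measurable_fun (@sqrt_continuous R).
apply: measurable_funD => //; apply: measurable_funM => //.
by apply: measurable_funX; exact: measurable_minr.
Qed.

Definition clip {R : realType} (n : nat) (y : R) : R :=
  Num.max (- n%:R) (Num.min y n%:R).

Section clip.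
Context {R : realType}.
Implicit Types (n : nat) (y : R).

Lemma norm_clip_le n y : `|clip n y| <= n%:R.
Proof.
rewrite ler_norml le_max lexx ge_max ge_min lexx orbT /= andbT.
by have := ler0n R n; lra.
Qed.

Lemma norm_clip_le_norm n y : `|clip n y| <= `|y|.
Proof.
have n0 := ler0n R n; have y0 := normr_ge0 y.
have Ny : - `|y| <= y by rewrite lerNl -normrN ler_norm.
rewrite ler_norml le_max le_min ge_max ge_min ler_norm Ny /= andbT.
by apply/andP; split; [apply/orP; right|]; lra.
Qed.

Lemma clip_id n y : `|y| <= n%:R -> clip n y = y.
Proof.
rewrite ler_norml => /andP[ny yn].
by rewrite /clip (min_l yn) (max_r ny).
Qed.

Lemma measurable_clip n : measurable_fun setT (@clip R n).
Proof. by apply: measurable_maxr => //; exact: measurable_minr. Qed.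

End clip.

Lemma integral_dist_clip_cvg0 {d} {T : measurableType d} {R : realType}
    (mu : {measure set T -> \bar R}) (h : T -> R) :
  mu.-integrable setT (EFin \o h) ->
  (\int[mu]_w `|(clip n (h w))%:E - (h w)%:E|)%E @[n --> \oo] --> 0%E.
Proof.
move=> ih; have mh : measurable_fun setT h by exact/measurable_EFinP/(measurable_int mu).
have clip_cvg : {ae mu, forall w, setT w ->
    (fun n => (clip n (h w))%:E) @ \oo --> (h w)%:E}.
  apply: aeW => w _; apply: cvg_near_cst.
  exists (Num.truncn `|h w|).+1 => // n /= Nn; rewrite clip_id //.
  by rewrite (le_trans (ltW (truncnS_gt _))) // ler_nat.
have clip_dom : {ae mu, forall w n, setT w ->
    (`|(clip n (h w))%:E| <= (abse \o (EFin \o h)) w)%E}.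
  by apply: aeW => w n _ /=; rewrite lee_fin norm_clip_le_norm.
have mclip n : measurable_fun setT (EFin \o (clip n \o h)).
  by apply/measurable_EFinP; exact: measurableT_comp (measurable_clip n) mh.
by have [] := dominated_convergence measurableT mclip (measurable_int mu ih)
  clip_cvg (integrable_abse ih) clip_dom.
Qed.

Section acceptance_set.
Context d (T : measurableType d) (R : realType) (P : probability T R).
Variables (a c alpha : R).

Let P_setT : (P : {measure set T -> \bar R}) setT = 1%E.
Proof. exact: probability_setT. Qed.

Lemma Linf_bounded (f : T -> R) (M : R) :
  measurable_fun setT f -> (forall w, `|f w| <= M) -> Linf P f.
Proof.
move=> mf fM; split => //.
rewrite /finite_norm unlock /Lnorm P_setT lte01.
apply: (@le_lt_trans _ _ M%:E); last exact: ltry.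
by apply/ess_supP; apply: nearW => w; rewrite /= lee_fin.
Qed.

Hypothesis a0 : 0 < a.

Let dev (X : T -> R) w := `|X w - c|.

Let integrable_dev2 {X : T -> R} : P.-integrable setT (EFin \o dev X) ->
  P.-integrable setT (fun w => (2 * dev X w)%:E).
Proof. by move=> idev; under eq_fun do rewrite EFinM; exact: integrableZl. Qed.

Lemma integrable_u_fun_comp {X : T -> R} : measurable_fun setT X ->
  P.-integrable setT (EFin \o dev X) ->
  P.-integrable setT (fun w => (u_fun a c (X w))%:E).
Proof.
move=> mX idev.
have ibound := integrableD measurableT
  (finite_measure_integrable_cst P `|Cconst a c| measurableT) (integrable_dev2 idev).
apply: (le_integrable measurableT _ _ ibound).
  by apply/measurable_EFinP; exact: measurableT_comp (measurable_u_fun a c) mX.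
move=> w _ /=; rewrite lee_fin.
rewrite [leRHS]ger0_norm ?addr_ge0 ?mulr_ge0 ?normr_ge0 //.
rewrite -[u_fun _ _ _](subrK (Cconst a c)) (le_trans (ler_normD _ _)) //.
by rewrite [leLHS]addrC lerD2l (dist_u_fun_Cconst _ _ _ a0).
Qed.

Lemma integral_u_fun_ge {X : T -> R} : measurable_fun setT X ->
  P.-integrable setT (EFin \o dev X) ->
  ((Cconst a c)%:E - 2%:E * \int[P]_w (dev X w)%:E <= \int[P]_w (u_fun a c (X w))%:E)%E.
Proof.
move=> mX idev; have icst := finite_measure_integrable_cst P (Cconst a c) measurableT.
rewrite -ge0_integralZl_EFin //; [|by move=> w _; rewrite lee_fin /dev|exact: measurable_int idev].
under eq_integral do rewrite -EFinM.
have -> : (Cconst a c)%:E = (\int[P]_w (cst (Cconst a c) w)%:E)%E.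
  by rewrite (integral_cst P measurableT (Cconst a c)%:E) P_setT mule1.
rewrite -integralB_EFin //; last exact: integrable_dev2.
apply: le_integral => //.
- exact: (integrableB measurableT icst (integrable_dev2 idev) : P.-integrable _ _).
- exact: integrable_u_fun_comp.
- move=> w _; rewrite /= lee_fin /dev.
  by have := dist_u_fun_Cconst _ c (X w) a0; rewrite ler_norml => /andP[]; lra.
Qed.

Lemma Au_of_integral_dev_le (X : T -> R) : Linf P X ->
  P.-integrable setT (EFin \o dev X) ->
  (\int[P]_w (dev X w)%:E <= ((Cconst a c - alpha) / 2)%:E)%E ->
  Au P a c alpha X.
Proof.
move=> [mX XLinf] idev dev_le; split; first by [].
apply: le_trans (integral_u_fun_ge mX idev).
have dev_fin : (\int[P]_w (dev X w)%:E)%E \is a fin_num.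
  rewrite ge0_fin_numE; first exact: le_lt_trans dev_le (ltry _).
  by apply: integral_ge0 => w _; rewrite lee_fin /dev.
rewrite -(fineK dev_fin) lee_fin in dev_le *.
by rewrite -EFinM -EFinB lee_fin; lra.
Qed.

Lemma Au_clip (h : T -> R) (n : nat) : P.-integrable setT (EFin \o h) ->
  (\int[P]_w `|(h w)%:E| <= ((Cconst a c - alpha) / 2)%:E)%E ->
  Au P a c alpha (fun w => c + clip n (h w)).
Proof.
move=> ih h_le.
have mclip : measurable_fun setT (clip n \o h).
  exact/(measurableT_comp (measurable_clip n))/measurable_EFinP/(measurable_int P ih).
have dev_clip : dev (fun w => c + clip n (h w)) = fun w => `|clip n (h w)|.
  by apply/funext => w; rewrite /dev addrC addKr.
have idev : P.-integrable setT (EFin \o dev (fun w => c + clip n (h w))).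
  rewrite dev_clip; apply: (le_integrable measurableT _ _ (integrable_abse ih)).
    by apply/measurable_EFinP; apply: measurableT_comp.
  by move=> w _ /=; rewrite lee_fin !normr_id norm_clip_le_norm.
apply: Au_of_integral_dev_le idev _.
  apply: (@Linf_bounded _ (`|c| + n%:R)); first exact: measurable_funD.
  by move=> w; rewrite (le_trans (ler_normD _ _)) // lerD2l norm_clip_le.
apply: le_trans h_le; rewrite dev_clip; apply: ge0_le_integral => //.
- by apply/measurable_EFinP; apply: measurableT_comp.
- by apply: measurableT_comp => //; exact: measurable_int ih.
- by move=> w _ /=; rewrite lee_fin norm_clip_le_norm.
Qed.

Hypothesis alpha_lt : alpha < Cconst a c.

(* The L^1-ball of radius (C - alpha)/2 around the constant c lies in the
   L^1-closure of A_u. *)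
Lemma Lp1_interior_Lclosure_Au : Lp_interior_nonempty P 1 (Lclosure P 1 (Au P a c alpha)).
Proof.
have e0 : 0 < (Cconst a c - alpha) / 2 by rewrite divr_gt0 // subr_gt0.
have Lp1_cst : Lp P 1 (cst c).
  split; first exact: measurable_cst.
  by rewrite /finite_norm Lnorm1 /= integral_cst // P_setT mule1 ltry.
exists (cst c); split => //; exists ((Cconst a c - alpha) / 2) => // g Lg g_near.
split => // e' e'0.
pose h w := g w - c.
have h_lt : (\int[P]_w `|(h w)%:E| < ((Cconst a c - alpha) / 2)%:E)%E.
  by move: g_near; rewrite /Ldist Lnorm1.
have ih : P.-integrable setT (EFin \o h).
  apply/integrableP; split; last exact: lt_trans h_lt (ltry _).
  by apply/measurable_EFinP; apply: measurable_funB => //; case: Lg.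
have [N _ clip_near] : \forall n \near \oo,
    (\int[P]_w `|(clip n (h w))%:E - (h w)%:E| < e'%:E)%E.
  by move: (@nbhs_open_ereal_lt R 0 (fun=> e') e'0); apply: integral_dist_clip_cvg0.
exists (fun w => c + clip N (h w)); split; first exact: Au_clip (ltW h_lt).
suff -> : Ldist P 1 g (fun w => c + clip N (h w)) =
    (\int[P]_w `|(clip N (h w))%:E - (h w)%:E|)%E by exact: clip_near N (leqnn N).
rewrite /Ldist Lnorm1; apply: eq_integral => w _.
by rewrite /= distrC /h; congr (`|_|%:E); ring.
Qed.

End acceptance_set.

(* The index set lies in [1, oo), so it attains its infimum as soon as it contains 1. *)
Lemma Index_fin_eq1 {d} {T : measurableType d} {R : realType} (P : probability T R)
    (B : set (T -> R)) :
  index_set P B 1 -> Index_fin P B = 1%:E.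
Proof.
move=> B1; apply/eqP; rewrite eq_le; apply/andP; split.
  by apply: ereal_inf_lbound; exists 1.
by apply: le_ereal_inf_tmp => _ [p [p1 _] <-]; rewrite lee_fin.
Qed.

Theorem corollary6p9 (d : measure_display) (T : measurableType d) (R : realType)
  (P : probability T R) (a c alpha S0 : R) (ST : T -> R) :
  nonatomic P ->
  0 < a -> 0 <= c -> alpha < Cconst a c ->
  0 < S0 ->
  {ae P, forall w, 0 <= ST w} ->
  ~ {ae P, forall w, ST w = 0} ->
  Linf P ST ->
  (forall X, Linf P X -> rho (Au P a c alpha) S0 ST X \is a fin_num) ->
  Index_fin P (Au P a c alpha) = 1%:E /\ Index_fin_attained P (Au P a c alpha).
Proof.
move=> _ a0 _ alpha_lt _ _ _ _ _.
have index1 : index_set P (Au P a c alpha) 1.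
  by split; [exact: lexx | exact: Lp1_interior_Lclosure_Au].
have Index1 := Index_fin_eq1 _ _ index1.
by split => //; exists 1.
Qed.
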